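(* Let $k\ge2$ be a power of two, $A,B\subseteq\Gamma$ finite sets, and $P\subseteq A-B$. Then $$\left(\frac{\sum_{x\in P}r(x)}{|A|^{1/2}|B|^{1/2}}\right)^{4k}\le\mathsf{E}_{2k}(A,\dots,A,B,\dots,B)\,\mathsf{T}_k(P),$$ where $r(x)=|\{(a,b)\in A\times B: a-b=x\}|$.
   Context: $\Gamma$ is an abelian group. $(f\circ f)(x)=\sum_y f(y)f(y+x)$. $\mathsf{E}_{2k}(A,\dots,A,B,\dots,B)$ with $k$ copies of $A$ and $k$ of $B$ is $\sum_x(A\circ A)(x)^k(B\circ B)(x)^k$. $\mathsf{T}_k(P)=|\{(p_1,\dots,p_k,p_1',\dots,p_k')\in P^{2k}: p_1+\dots+p_k=p_1'+\dots+p_k'\}|$. *)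

From HB Require Import structures.
From mathcomp Require Import all_boot all_order all_algebra.
From mathcomp Require Import finmap.
Set Implicit Arguments. Unset Strict Implicit. Unset Printing Implicit Defensive.
Import Order.TTheory GRing.Theory Num.Theory.
Local Open Scope fset_scope.
Local Open Scope ring_scope.

(* (A o A)(x) = sum_y 1_A(y) 1_A(y + x) = #{ y in A | y + x in A } *)
Definition selfconv (G : zmodType) (A : {fset G}) (x : G) : nat :=
  #|` [fset y in A | y + x \in A]|.

(* The difference set A - A; (A o A)(x) = 0 outside it, so the sum over all x
   in Gamma defining E_{2k} reduces to a sum over this finite set. *)
Definition diffset (G : zmodType) (A B : {fset G}) : {fset G} :=
  [fset a - b | a in A, b in B].

Definition E2k (G : zmodType) (k : nat) (A B : {fset G}) : nat :=
  \sum_(x <- diffset A A) (selfconv A x ^ k * selfconv B x ^ k)%N.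

Definition Tk (G : zmodType) (k : nat) (P : {fset G}) : nat :=
  #|[set pq : {ffun 'I_k -> P} * {ffun 'I_k -> P} |
      \sum_(i < k) val (pq.1 i) == \sum_(i < k) val (pq.2 i)]|.

Definition rAB (G : zmodType) (A B : {fset G}) (x : G) : nat :=
  \sum_(a <- A) \sum_(b <- B) (nat_of_bool ((a - b)%R == x)).

From HB Require Import structures.
From mathcomp Require Import all_boot all_order all_algebra.
From mathcomp Require Import finmap.
From mathcomp Require Import zify.
Set Implicit Arguments. Unset Strict Implicit. Unset Printing Implicit Defensive.
Import Order.TTheory GRing.Theory Num.Theory.

(* Write the left-hand numerator as S = #{(a, b) in A x B : a - b in P} and let
   K(d, c) = #{a in A : a - d, a - c in P}, a symmetric kernel on B.  Then
   S^2 <= |A| sum_(b,c in B) K(b, c), and Cauchy-Schwarz in the forms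
   (sum K^m)^2 <= |B| sum K^(2m) and sum K^(2m) <= |B| tr K^(2m) yields, for k a
   power of two, S^(2k) <= (|A||B|)^k tr K^k.  The entry K^k(b, c) counts walks
   b = b_0, ..., b_k = c with b_i in B, b_i + p_i in A and b_(i+1) = b_i + p_i - q_i
   for labels p_i, q_i in P; the walk is closed iff sum p = sum q.  Grouping
   closed walks by their label, Cauchy-Schwarz gives (tr K^k)^2 <= T_k(P) times
   the sum over labels of the squared number of starting points.  Two starting
   points b and b + x of one label are a starting point for the same label in
   A :&: (A - x) and B :&: (B - x), so that sum is at most
   sum_x (A o A)(x)^k (B o B)(x)^k = E_2k(A, .., B). *)

Lemma sum_pred1_uniq (T : eqType) (s : seq T) (y : T) (F : T -> nat) :
  uniq s -> \sum_(x <- s) (x == y) * F x = (y \in s) * F y.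
Proof.
elim: s => [|x s IH] /=; first by rewrite big_nil.
case/andP=> xs us; rewrite big_cons IH // in_cons.
by case: (eqVneq x y) => [<-|_] //=; rewrite (negbTE xs) addn0.
Qed.

Lemma Cauchy_Schwarz_nat (T : Type) (s : seq T) (f g : T -> nat) :
  (\sum_(i <- s) f i * g i) ^ 2 <= (\sum_(i <- s) f i ^ 2) * \sum_(i <- s) g i ^ 2.
Proof.
rewrite -(leq_pmul2l (isT : 0 < 2)).
have -> : 2 * (\sum_(i <- s) f i * g i) ^ 2 =
          \sum_(i <- s) \sum_(j <- s) 2 * (f i * g j * (f j * g i)).
  rewrite -mulnn big_distrl big_distrr; apply: eq_bigr => i _.
  rewrite big_distrr big_distrr; apply: eq_bigr => j _.
  by rewrite /= mulnACA [g i * _]mulnC mulnACA.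
have prodE : (\sum_(i <- s) f i ^ 2) * \sum_(i <- s) g i ^ 2 =
              \sum_(i <- s) \sum_(j <- s) (f i * g j) ^ 2.
  by rewrite big_distrl; apply: eq_bigr => i _; rewrite big_distrr;
     apply: eq_bigr => j _; rewrite expnMn.
have -> : 2 * ((\sum_(i <- s) f i ^ 2) * \sum_(i <- s) g i ^ 2) =
          \sum_(i <- s) \sum_(j <- s) ((f i * g j) ^ 2 + (f j * g i) ^ 2).
  rewrite mul2n -addnn {1}prodE prodE [in X in _ + X]exchange_big -big_split.
  by apply: eq_bigr => i _; rewrite -big_split.
by apply: leq_sum => i _; apply: leq_sum => j _; apply: nat_Cauchy.
Qed.

Lemma sqr_sum_leq_card (T : choiceType) (X : {fset T}) (f : T -> nat) :
  (\sum_(x <- X) f x) ^ 2 <= #|` X| * \sum_(x <- X) f x ^ 2.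
Proof.
have := Cauchy_Schwarz_nat X f (fun=> 1).
by rewrite card_fset_sum1 mulnC; under eq_bigr do rewrite muln1.
Qed.

Lemma sum_translate (G : zmodType) (X Y : {fset G}) (d : G) (h : G -> nat) :
  \sum_(a <- X) ((a - d)%R \in Y) * h a = \sum_(y <- Y) ((d + y)%R \in X) * h (d + y)%R.
Proof.
transitivity (\sum_(a <- X) \sum_(y <- Y) (y == (a - d)%R) * h a).
  by apply: eq_bigr => a _; rewrite (sum_pred1_uniq _ (fun=> h a)) ?fset_uniq.
rewrite exchange_big /=; apply: eq_bigr => y _.
rewrite -sum_pred1_uniq ?fset_uniq //; apply: eq_bigr => a _.
by rewrite eq_sym subr_eq addrC.
Qed.

Lemma sum_prodE (I J : finType) (F : I * J -> nat) : \sum_p F p = \sum_i \sum_j F (i, j).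
Proof. by rewrite pair_bigA; apply: eq_bigr => -[]. Qed.

Definition ffun_rcons (T : Type) n (g : {ffun 'I_n -> T}) (t : T) : {ffun 'I_n.+1 -> T} :=
  [ffun i => if insub (val i) is Some j then g j else t].

Lemma ffun_rcons_widen (T : Type) n (g : {ffun 'I_n -> T}) t (j : 'I_n) :
  ffun_rcons g t (widen_ord (leqnSn n) j) = g j.
Proof. by rewrite ffunE /= valK. Qed.

Lemma ffun_rcons_max (T : Type) n (g : {ffun 'I_n -> T}) t : ffun_rcons g t ord_max = t.
Proof. by rewrite ffunE insubN ?ltnn. Qed.

Lemma big_ffun_rcons (T : finType) n (F : {ffun 'I_n.+1 -> T} -> nat) :
  \sum_f F f = \sum_(g : {ffun 'I_n -> T}) \sum_(t : T) F (ffun_rcons g t).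
Proof.
rewrite pair_bigA /=.
pose split_last (f : {ffun 'I_n.+1 -> T}) :=
  ([ffun j => f (widen_ord (leqnSn n) j)], f ord_max).
rewrite (reindex (fun gt => ffun_rcons gt.1 gt.2)) //.
exists split_last => [[g t] _ | f _]; rewrite /split_last /=.
  by rewrite ffun_rcons_max; congr (_, _); apply/ffunP => j; rewrite ffunE ffun_rcons_widen.
apply/ffunP => i; rewrite ffunE; case: insubP => [j _ ij | ].
  by rewrite ffunE; congr (f _); apply: val_inj.
rewrite -leqNgt => i_max; congr (f _); apply: val_inj; apply/eqP.
by rewrite /= eqn_leq i_max -ltnS ltn_ord.
Qed.

Section Kernel.
Variables (G : zmodType) (A B P : {fset G}).

Definition kern (d c : G) : nat := \sum_(a <- A) ((a - d)%R \in P) * ((a - c)%R \in P).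

Fixpoint kern_pow n (b c : G) : nat :=
  if n is n'.+1 then \sum_(d <- B) kern_pow n' b d * kern d c else b == c.

Definition kern_rowsum n b := \sum_(c <- B) kern_pow n b c.
Definition kern_total n := \sum_(b <- B) kern_rowsum n b.
Definition kern_trace n := \sum_(b <- B) kern_pow n b b.

Lemma kern_powS n b c : kern_pow n.+1 b c = \sum_(d <- B) kern_pow n b d * kern d c.
Proof. by []. Qed.

Lemma kern_sym d c : kern d c = kern c d.
Proof. by apply: eq_bigr => a _; rewrite mulnC. Qed.

Lemma kern_pow1 b c : kern_pow 1 b c = (b \in B) * kern b c.
Proof.
rewrite /= -(sum_pred1_uniq _ (kern^~ c)) ?fset_uniq //.
by apply: eq_bigr => d _; rewrite eq_sym.
Qed.

Lemma kern_pow_add m n b c : c \in B ->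
  kern_pow (m + n) b c = \sum_(d <- B) kern_pow m b d * kern_pow n d c.
Proof.
elim: n c => [|n IH] c cB.
  rewrite addn0 /= (eq_bigr (fun d => (d == c) * kern_pow m b d)) => [|d _];
    last exact: mulnC.
  by rewrite sum_pred1_uniq ?fset_uniq // cB mul1n.
rewrite addnS kern_powS big_seq.
rewrite (eq_bigr (fun e => (\sum_(d <- B) kern_pow m b d * kern_pow n d e) * kern e c))
  => [|e eB]; last by rewrite IH.
rewrite -big_seq; under eq_bigr do rewrite big_distrl.
rewrite exchange_big; apply: eq_bigr => d _ /=.
by rewrite big_distrr; apply: eq_bigr => e _; rewrite /= mulnA.
Qed.

Lemma kern_pow_sym n b c : b \in B -> c \in B -> kern_pow n b c = kern_pow n c b.
Proof.
elim: n b c => [|n IH] b c bB cB; first by rewrite /= eq_sym.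
rewrite -[in LHS]add1n kern_pow_add // kern_powS big_seq [RHS]big_seq.
by apply: eq_bigr => d dB; rewrite kern_pow1 bB mul1n IH // mulnC kern_sym.
Qed.

Lemma kern_total_double m : kern_total (m + m) = \sum_(b <- B) kern_rowsum m b ^ 2.
Proof.
transitivity (\sum_(c <- B) \sum_(c' <- B) \sum_(b <- B) kern_pow m b c * kern_pow m b c').
  rewrite /kern_total /kern_rowsum big_seq [RHS]big_seq.
  apply: eq_bigr => c cB; rewrite big_seq [RHS]big_seq; apply: eq_bigr => c' c'B.
  rewrite kern_pow_add // big_seq [RHS]big_seq.
  by apply: eq_bigr => b bB; rewrite [kern_pow m c b]kern_pow_sym.
under eq_bigr do rewrite exchange_big.
rewrite exchange_big; apply: eq_bigr => b _ /=.
by rewrite -mulnn big_distrl; apply: eq_bigr => c _; rewrite big_distrr.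
Qed.

Lemma kern_total_sqr_leq m : kern_total m ^ 2 <= #|` B| * kern_total (m + m).
Proof. by rewrite kern_total_double sqr_sum_leq_card. Qed.

Lemma kern_total_leq_trace m : kern_total (m + m) <= #|` B| * kern_trace (m + m).
Proof.
rewrite kern_total_double /kern_trace big_distrr /= big_seq [leqRHS]big_seq.
apply: leq_sum => b bB; apply: leq_trans (sqr_sum_leq_card _ _) _.
rewrite leq_mul2l kern_pow_add // big_seq [leqRHS]big_seq; apply/orP; right.
by apply: eq_leq; apply: eq_bigr => c cB; rewrite [kern_pow m c b]kern_pow_sym // mulnn.
Qed.

Lemma kern_pow_leq n b c : kern_pow n.+1 b c <= #|` A| ^ n.+1 * #|` B| ^ n.
Proof.
have kern_leq d e : kern d e <= #|` A|.
  rewrite card_fset_sum1; apply: leq_sum => a _.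
  by case: (_ \in P); case: (_ \in P).
elim: n c => [|n IH] c.
  by rewrite kern_pow1 expn1 expn0 muln1; case: (b \in B); rewrite ?mul1n.
apply: (@leq_trans (\sum_(d <- B) #|` A| ^ n.+1 * #|` B| ^ n * #|` A|)).
  by rewrite kern_powS; apply: leq_sum => d _; apply: leq_mul.
have sum_constB x : \sum_(d <- B) x = #|` B| * x.
  by rewrite card_fset_sum1 big_distrl; apply: eq_bigr => d _; rewrite /= mul1n.
by rewrite sum_constB [#|` A| ^ n.+2]expnS [#|` B| ^ n.+1]expnS; lia.
Qed.

End Kernel.

Local Notation shift X x := [fset y in X | (y + x)%R \in X]%fset.

Section Walks.
Variable G : zmodType.
Implicit Types (A B : {fset G}) (b x : G) (p q : nat -> G).

Fixpoint walk_end n b p q : G :=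
  if n is n'.+1 then (walk_end n' b p q + p n' - q n')%R else b.

Fixpoint walk_ok A B n b p q : bool :=
  if n is n'.+1 then [&& walk_ok A B n' b p q, walk_end n' b p q \in B
                       & (walk_end n' b p q + p n')%R \in A] else true.

Lemma walk_endE n b p q : walk_end n b p q = (b + \sum_(i < n) (p i - q i))%R.
Proof. by elim: n => [|n IH] /=; rewrite ?big_ord0 ?addr0 // IH big_ord_recr !addrA. Qed.

Lemma walk_end_ext n b p q p' q' :
    (forall i, i < n -> p i = p' i) -> (forall i, i < n -> q i = q' i) ->
  walk_end n b p q = walk_end n b p' q'.
Proof.
move=> eq_p eq_q; rewrite !walk_endE; congr (_ + _)%R.
by apply: eq_bigr => i _; rewrite eq_p ?eq_q.
Qed.

Lemma walk_ok_ext A B n b p q p' q' :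
    (forall i, i < n -> p i = p' i) -> (forall i, i < n -> q i = q' i) ->
  walk_ok A B n b p q = walk_ok A B n b p' q'.
Proof.
elim: n => [//|n IH] eq_p eq_q /=.
have eq_p' i : i < n -> p i = p' i by move=> lt_in; apply/eq_p/ltnW.
have eq_q' i : i < n -> q i = q' i by move=> lt_in; apply/eq_q/ltnW.
by rewrite IH // (walk_end_ext b eq_p' eq_q') eq_p.
Qed.

Lemma walk_ok_first A B n b p q : 0 < n -> walk_ok A B n b p q -> (b + p 0)%R \in A.
Proof.
elim: n => [//|[|n] IH] _ /=; first by case/andP.
by case/and3P=> + _ _; apply: IH.
Qed.

Lemma walk_ok_translate A B n b x p q :
  walk_ok A B n b p q && walk_ok A B n (b + x)%R p q =
  walk_ok (shift A x) (shift B x) n b p q.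
Proof.
elim: n => [//|n IH] /=; rewrite -IH !inE !walk_endE -!addrA.
rewrite [(x + _)%R]addrC [(x + (_ + p n))%R]addrC !addrA.
by do 2!case: walk_ok; do 2!case: (_ \in B); do 2!case: (_ \in A).
Qed.

End Walks.

Section Labels.
Variables (G : zmodType) (P : {fset G}).
Local Notation labels n := ({ffun 'I_n -> P} * {ffun 'I_n -> P})%type.

Definition ffun_nat n (f : {ffun 'I_n -> P}) (i : nat) : G :=
  if insub i is Some j then val (f j) else 0%R.

Lemma ffun_natE n (f : {ffun 'I_n -> P}) (i : 'I_n) : ffun_nat f i = val (f i).
Proof. by rewrite /ffun_nat valK. Qed.

Lemma ffun_nat_rcons n (g : {ffun 'I_n -> P}) t i :
  i < n -> ffun_nat (ffun_rcons g t) i = ffun_nat g i.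
Proof.
move=> lt_in.
transitivity (ffun_nat (ffun_rcons g t) (widen_ord (leqnSn n) (Ordinal lt_in))) => //.
by rewrite ffun_natE ffun_rcons_widen -ffun_natE.
Qed.

Lemma ffun_nat_rcons_last n (g : {ffun 'I_n -> P}) t : ffun_nat (ffun_rcons g t) n = val t.
Proof. by rewrite -[n]/(val (@ord_max n)) ffun_natE ffun_rcons_max. Qed.

Definition walk_count A B n b c : nat :=
  \sum_(pq : labels n) (walk_ok A B n b (ffun_nat pq.1) (ffun_nat pq.2)
                         && (walk_end n b (ffun_nat pq.1) (ffun_nat pq.2) == c)).

Lemma walk_count_rcons A B n b c (g1 g2 : {ffun 'I_n -> P}) t1 t2 :
  walk_ok A B n.+1 b (ffun_nat (ffun_rcons g1 t1)) (ffun_nat (ffun_rcons g2 t2))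
    && (walk_end n.+1 b (ffun_nat (ffun_rcons g1 t1)) (ffun_nat (ffun_rcons g2 t2)) == c)
  = [&& walk_ok A B n b (ffun_nat g1) (ffun_nat g2),
        walk_end n b (ffun_nat g1) (ffun_nat g2) \in B,
        (walk_end n b (ffun_nat g1) (ffun_nat g2) + val t1)%R \in A &
        (walk_end n b (ffun_nat g1) (ffun_nat g2) + val t1 - val t2)%R == c].
Proof.
have eq1 i : i < n -> ffun_nat (ffun_rcons g1 t1) i = ffun_nat g1 i by apply: ffun_nat_rcons.
have eq2 i : i < n -> ffun_nat (ffun_rcons g2 t2) i = ffun_nat g2 i by apply: ffun_nat_rcons.
by rewrite /= (walk_ok_ext A B b eq1 eq2) (walk_end_ext b eq1 eq2) !ffun_nat_rcons_last !andbA.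
Qed.

Lemma kern_labels A d c : kern A P d c =
  \sum_(t1 : P) \sum_(t2 : P) ((d + val t1)%R \in A) * ((d + val t1 - val t2)%R == c).
Proof.
rewrite /kern sum_translate big_seq_fsetE /=; apply: eq_bigr => t1 _.
rewrite -big_distrr /=; congr (_ * _).
rewrite -(big_seq_fsetE _ _ predT (fun y => ((d + val t1 - y)%R == c : nat))) /=.
rewrite -[LHS]muln1 -(sum_pred1_uniq _ (fun=> 1)) ?fset_uniq //.
by apply: eq_bigr => y _; rewrite muln1 eq_sym !subr_eq [(y + c)%R]addrC.
Qed.

Lemma kern_pow_walks A B n b c : kern_pow A B P n b c = walk_count A B n b c.
Proof.
elim: n c => [|n IH] c.
  rewrite /walk_count /= (eq_bigr (fun=> (b == c : nat))) //.
  by rewrite sum_nat_const card_prod !card_ffun card_ord /= expn0 !mul1n.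
rewrite kern_powS.
transitivity (\sum_(pq : labels n)
   (walk_end n b (ffun_nat pq.1) (ffun_nat pq.2) \in B) *
   (walk_ok A B n b (ffun_nat pq.1) (ffun_nat pq.2) *
    kern A P (walk_end n b (ffun_nat pq.1) (ffun_nat pq.2)) c)).
  under eq_bigr do rewrite IH /walk_count big_distrl.
  rewrite exchange_big; apply: eq_bigr => pq _ /=.
  set e := walk_end _ _ _ _; set ok := walk_ok _ _ _ _ _ _.
  rewrite -(sum_pred1_uniq _ (fun d => ok * kern A P d c)) ?fset_uniq //.
  by apply: eq_bigr => d _; rewrite eq_sym; case: ok; case: (d == e); rewrite /= ?mul0n ?mul1n.
rewrite /walk_count [LHS]sum_prodE [RHS]sum_prodE [RHS]big_ffun_rcons.
apply: eq_bigr => g1 _; under [RHS]eq_bigr => t1 _ do rewrite big_ffun_rcons.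
rewrite [RHS]exchange_big; apply: eq_bigr => g2 _ /=.
under [RHS]eq_bigr => t1 _ do under eq_bigr => t2 _ do rewrite walk_count_rcons.
rewrite kern_labels big_distrr big_distrr; apply: eq_bigr => t1 _.
rewrite big_distrr big_distrr; apply: eq_bigr => t2 _ /=.
by case: walk_ok; case: (_ \in B); case: (_ \in A); case: (_ == c).
Qed.

End Labels.

Lemma selfconvE (G : zmodType) (X : {fset G}) x :
  selfconv X x = \sum_(b <- X) ((b + x)%R \in X).
Proof.
rewrite /selfconv card_fset_sum1 -big_fset_condE big_mkcond /=.
by apply: eq_bigr => b _; case: (_ \in X).
Qed.

Section Trace.
Variables (G : zmodType) (A B P : {fset G}) (k : nat).
Hypothesis k_gt0 : 0 < k.
Local Notation labels := ({ffun 'I_k -> P} * {ffun 'I_k -> P})%type.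

Definition closed_label (pq : labels) : bool :=
  (\sum_(i < k) val (pq.1 i) == \sum_(i < k) val (pq.2 i))%R.

Definition label_starts (pq : labels) : nat :=
  \sum_(b <- B) walk_ok A B k b (ffun_nat pq.1) (ffun_nat pq.2).

Lemma walk_end_closed_label b (pq : labels) :
  (walk_end k b (ffun_nat pq.1) (ffun_nat pq.2) == b) = closed_label pq.
Proof.
rewrite walk_endE -[X in _ == X]addr0 (inj_eq (addrI b)) sumrB subr_eq0.
by congr (_ == _); apply: eq_bigr => i _; rewrite ffun_natE.
Qed.

Lemma kern_trace_closed_label :
  kern_trace A B P k = \sum_(pq : labels) closed_label pq * label_starts pq.
Proof.
rewrite /kern_trace; under eq_bigr do rewrite kern_pow_walks.
rewrite exchange_big /=; apply: eq_bigr => pq _.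
rewrite /label_starts big_distrr /=; apply: eq_bigr => b _.
by rewrite walk_end_closed_label; case: closed_label; case: walk_ok.
Qed.

Lemma Tk_closed_label : Tk k P = \sum_(pq : labels) closed_label pq.
Proof. by rewrite /Tk -sum1_card big_mkcond; apply: eq_bigr => pq _; rewrite inE. Qed.

Lemma sqr_label_starts (pq : labels) : label_starts pq ^ 2 =
  \sum_(x <- diffset A A) \sum_(b <- B)
    ((b + x)%R \in B) * walk_ok (shift A x) (shift B x) k b (ffun_nat pq.1) (ffun_nat pq.2).
Proof.
set ok := fun b => walk_ok A B k b (ffun_nat pq.1) (ffun_nat pq.2).
rewrite -mulnn /label_starts big_distrl /=.
transitivity (\sum_(b <- B) \sum_(x <- diffset A A) ((b + x)%R \in B) * (ok b && ok (b + x)%R)).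
  apply: eq_bigr => b _; rewrite big_distrr /=.
  transitivity (\sum_(b' <- B) ((b' - b)%R \in diffset A A) * (ok b * ok b')).
    apply: eq_bigr => b' _; rewrite -/(ok b) -/(ok b').
    case ok_b: (ok b); case ok_b': (ok b'); rewrite ?muln0 ?mul0n ?muln1 //.
    suff -> : (b' - b)%R \in diffset A A by [].
    apply/imfset2P; exists (b' + ffun_nat pq.1 0)%R; first exact: walk_ok_first k_gt0 ok_b'.
    exists (b + ffun_nat pq.1 0)%R; first exact: walk_ok_first k_gt0 ok_b.
    by rewrite [(b + _)%R]addrC addrKA.
  rewrite (sum_translate B (diffset A A) b (fun b' => ok b * ok b')).
  by apply: eq_bigr => x _; case: (ok b); case: (ok (b + x)%R); rewrite ?muln0 ?muln1.
rewrite exchange_big /=; apply: eq_bigr => x _; apply: eq_bigr => b _.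
by rewrite /ok walk_ok_translate.
Qed.

Lemma sum_closed_sqr_label_starts_leq :
  \sum_(pq : labels) closed_label pq * label_starts pq ^ 2 <= E2k k A B.
Proof.
under eq_bigr => pq _ do rewrite sqr_label_starts.
apply: (@leq_trans (\sum_(x <- diffset A A) \sum_(b <- B)
    ((b + x)%R \in B) * kern_pow (shift A x) (shift B x) P k b b)).
  apply: eq_leq.
  under eq_bigr => pq _ do rewrite big_distrr /=.
  rewrite exchange_big /=; apply: eq_bigr => x _.
  under eq_bigr => pq _ do rewrite big_distrr /=.
  rewrite exchange_big /=; apply: eq_bigr => b _.
  rewrite kern_pow_walks /walk_count big_distrr /=; apply: eq_bigr => pq _.
  by rewrite walk_end_closed_label; case: closed_label; case: (_ \in B); case: walk_ok.
rewrite /E2k; apply: leq_sum => x _.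
case: k k_gt0 => [//|n] _.
apply: (@leq_trans (\sum_(b <- B) ((b + x)%R \in B) *
                      (#|` shift A x| ^ n.+1 * #|` shift B x| ^ n))).
  by apply: leq_sum => b _; rewrite leq_mul2l kern_pow_leq orbT.
rewrite -big_distrl /= -selfconvE [selfconv B x ^ n.+1]expnS.
by rewrite -[#|` shift A x|]/(selfconv A x) -[#|` shift B x|]/(selfconv B x); lia.
Qed.

Lemma sqr_kern_trace_leq : kern_trace A B P k ^ 2 <= Tk k P * E2k k A B.
Proof.
have -> : kern_trace A B P k =
          \sum_(pq : labels) closed_label pq * (closed_label pq * label_starts pq).
  rewrite kern_trace_closed_label.
  by apply: eq_bigr => pq _; case: closed_label; rewrite ?mul1n.
apply: leq_trans (Cauchy_Schwarz_nat _ _ _) _.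
have -> : \sum_(pq : labels) (closed_label pq : nat) ^ 2 = Tk k P.
  by rewrite Tk_closed_label; apply: eq_bigr => pq _; case: closed_label.
rewrite leq_mul2l (leq_trans _ sum_closed_sqr_label_starts_leq) ?orbT //.
by apply: eq_leq; apply: eq_bigr => pq _; case: closed_label; rewrite ?mul0n ?mul1n.
Qed.

End Trace.

Section PowerChain.
Variables (G : zmodType) (A B P : {fset G}).
Hypothesis B_gt0 : 0 < #|` B|.
Local Notation S := (\sum_(x <- P) rAB A B x).

Lemma sum_rABE : S = \sum_(a <- A) \sum_(b <- B) ((a - b)%R \in P).
Proof.
rewrite /rAB exchange_big; apply: eq_bigr => a _ /=.
rewrite exchange_big; apply: eq_bigr => b _ /=.
rewrite -[RHS]muln1 -(sum_pred1_uniq _ (fun=> 1)) ?fset_uniq //.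
by apply: eq_bigr => x _; rewrite muln1 eq_sym.
Qed.

Lemma sqr_sum_rAB_leq : S ^ 2 <= #|` A| * kern_total A B P 1.
Proof.
rewrite sum_rABE; apply: leq_trans (sqr_sum_leq_card _ _) _; rewrite leq_mul2l.
apply/orP; right; apply: eq_leq.
transitivity (\sum_(a <- A) \sum_(b <- B) \sum_(c <- B) ((a - b)%R \in P) * ((a - c)%R \in P)).
  by apply: eq_bigr => a _; rewrite -mulnn big_distrl; apply: eq_bigr => b _; rewrite big_distrr.
rewrite exchange_big big_seq [RHS]big_seq; apply: eq_bigr => b bB.
rewrite exchange_big; apply: eq_bigr => c _.
by rewrite kern_pow1 bB mul1n.
Qed.

Lemma sum_rAB_pow2_leq j :
  S ^ (2 * 2 ^ j) * #|` B| <= (#|` A| * #|` B|) ^ 2 ^ j * kern_total A B P (2 ^ j).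
Proof.
elim: j => [|j IH].
  by rewrite !expn1 mulnAC leq_mul2r sqr_sum_rAB_leq orbT.
rewrite -(leq_pmul2r B_gt0) expnS; set m := 2 ^ j.
have -> : S ^ (2 * (2 * m)) * #|` B| * #|` B| = (S ^ (2 * m) * #|` B|) ^ 2.
  by rewrite expnMn -expnM -mulnA mulnn [2 * (2 * m)]mulnC.
move: IH; rewrite -(@leq_exp2r _ _ 2) // => /leq_trans; apply.
rewrite expnMn -expnM -/m [m * 2]mulnC -mulnA leq_mul2l.
by rewrite mul2n -addnn [kern_total _ _ _ _ * _]mulnC kern_total_sqr_leq orbT.
Qed.

Lemma sum_rAB_pow2_leq_trace j :
  S ^ (2 * 2 ^ j.+1) <= (#|` A| * #|` B|) ^ 2 ^ j.+1 * kern_trace A B P (2 ^ j.+1).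
Proof.
rewrite -(leq_pmul2r B_gt0); apply: leq_trans (sum_rAB_pow2_leq j.+1) _.
rewrite -mulnA leq_mul2l expnS mul2n -addnn [kern_trace _ _ _ _ * _]mulnC.
by rewrite kern_total_leq_trace orbT.
Qed.

Lemma sum_rAB_pow_leq_E2k_Tk j k : k = 2 ^ j.+1 ->
  S ^ (4 * k) <= (#|` A| * #|` B|) ^ (2 * k) * (E2k k A B * Tk k P).
Proof.
move=> kE; have k_gt0 : 0 < k by rewrite kE expn_gt0.
move: (sum_rAB_pow2_leq_trace j); rewrite -kE -(@leq_exp2r _ _ 2) // -expnM.
rewrite mulnC mulnA => /leq_trans; apply.
rewrite expnMn -expnM [k * 2]mulnC leq_mul2l [E2k _ _ _ * _]mulnC.
by rewrite sqr_kern_trace_leq ?orbT.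
Qed.

End PowerChain.

Local Open Scope fset_scope.
Local Open Scope ring_scope.

Theorem proposition6 (R : rcfType) (G : zmodType) (k : nat)
  (hk2 : (2 <= k)%N) (hkpow : exists m : nat, k = (2 ^ m)%N)
  (A B P : {fset G}) (hP : P `<=` diffset A B) :
  ((\sum_(x <- P) (rAB A B x)%:R) /
     (Num.sqrt (#|` A|%:R : R) * Num.sqrt (#|` B|%:R : R))) ^+ (4 * k)
  <= (E2k k A B)%:R * (Tk k P)%:R.
Proof.
have [[|j] kE] := hkpow; first by rewrite kE in hk2.
have k4_gt0 : (0 < 4 * k)%N by rewrite kE muln_gt0 expn_gt0.
have [A0|A_gt0] := posnP #|` A|.
  by rewrite A0 sqrtr0 mul0r invr0 mulr0 expr0n gtn_eqF // -natrM ler0n.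
have [B0|B_gt0] := posnP #|` B|.
  by rewrite B0 sqrtr0 mulr0 invr0 mulr0 expr0n gtn_eqF // -natrM ler0n.
have denom_gt0 : 0 < Num.sqrt (#|` A|%:R : R) * Num.sqrt (#|` B|%:R).
  by rewrite mulr_gt0 // sqrtr_gt0 ltr0n.
rewrite expr_div_n ler_pdivrMr ?exprn_gt0 // -natr_sum.
have k4E : (4 * k = 2 * (2 * k))%N by rewrite mulnA.
rewrite [in X in _ <= _ * X]k4E [X in _ <= _ * X]exprM [(_ * _) ^+ 2]exprMn.
rewrite !sqr_sqrtr ?ler0n //.
rewrite -!natrM -!natrX -natrM ler_nat [X in (_ <= X)%N]mulnC.
exact (sum_rAB_pow_leq_E2k_Tk A P B_gt0 kE).
Qed.
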